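(* The generalized categories (as 0-cells), the functors between them (as 1-cells), and the natural transformations between such functors (as 2-cells) form a strict 2-category. Here 1-cells compose by composition of maps; vertical composition of natural transformations $\alpha: F \Rightarrow G$ and $\beta: G \Rightarrow H$ between functors $F,G,H:\mathcal{C}\to\mathcal{D}$ is $(\beta \circ \alpha)(x) = \beta(x)\cdot\alpha(x)$; the identity 2-cell on $F$ is $x \mapsto 1_{F(x)}$; and horizontal composition $\beta\star\alpha$ of $\alpha: F\Rightarrow G$ (with $F,G:\mathcal{C}\to\mathcal{D}$) and $\beta: F'\Rightarrow G'$ (with $F',G':\mathcal{D}\to\mathcal{E}$) is given by the same formula as for ordinary categories, $(\beta\star\alpha)(x) = G'(\alpha(x))\cdot \beta(F(x))$.
   Context: A generalized category is a tuple $(\mathcal{C},\le,s,t,\cdot)$ where $\mathcal{C}$ is a set, $\le$ a relation on $\mathcal{C}$, $s,t:\mathcal{C}\to\mathcal{C}$ maps (write $\bar a = s(a)$, $\hat a = t(a)$), and $\cdot$ a partially defined binary operation (write $ab$), such that: (1) $\le$ is a partial order; (2) $ab$ is defined iff $s(a)\le t(b)$; (3) if $(ab)c$ or $a(bc)$ is defined then $(ab)c=a(bc)$; (4) if $ab$ is defined then $s(ab)=s(b)$ and $t(ab)=t(a)$; (5) for every $a$ there is $b$ with $s(b)=t(b)=a$ such that $bc=c$ whenever $bc$ is defined and $cb=c$ whenever $cb$ is defined; this $b$ is unique, denoted $1_a$; (6) if $s(a)=t(a)=a$ then $ba=b$ whenever $ba$ is defined and $ab=b$ whenever $ab$ is defined;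 (7) if $a\le b$ then $s(a)\le s(b)$, $t(a)\le t(b)$ and $1_a\le 1_b$; and if $a\le b$, $c\le d$ and $ac,bd$ are defined then $ac\le bd$. A functor $F:\mathcal{C}\to\mathcal{D}$ is a map with $a\le b\Rightarrow F(a)\le F(b)$, $F(\bar a)=\overline{F(a)}$, $F(\hat a)=\widehat{F(a)}$, $F(ab)=F(a)F(b)$ whenever $ab$ is defined, and $F(1_a)=1_{F(a)}$. For functors $F,G:\mathcal{C}\to\mathcal{D}$, a natural transformation $F\Rightarrow G$ is a pair $(\theta_1,\theta_2)$ of maps $\mathcal{C}\to\mathcal{D}$ such that for all $a$, $\theta_1(a)F(a)$ and $G(a)\theta_2(a)$ are defined and equal, $\theta_1(a)=\theta_1(b)$ whenever $\hat a=\hat b$, and $\theta_2(a)=\theta_2(b)$ whenever $\bar a=\bar b$. Then $\theta_1(1_x)=\theta_2(1_x)$ for all $x$, and the transformation is identified with the single map $\theta(x):=\theta_1(1_x)$, which satisfies $\theta(\hat f)\cdot F(f)=G(f)\cdot\theta(\bar f)$ for all $f$. *)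

(* The partial product [ab] is modelled by a total
   function [mul] whose value is only meaningful when [ab] is defined, i.e.
   (axiom (2)) exactly when [src a <= tgt b]; see [defined] below. *)
Record GenCat := {
  obj :> Type;
  le : obj -> obj -> Prop;
  src : obj -> obj;
  tgt : obj -> obj;
  mul : obj -> obj -> obj;
  one : obj -> obj;
  le_refl : forall a, le a a;
  le_antisym : forall a b, le a b -> le b a -> a = b;
  le_trans : forall a b c, le a b -> le b c -> le a c;
  (* (3) if (ab)c or a(bc) is defined, both are defined and equal *)
  mul_assoc : forall a b c,
    (le (src a) (tgt b) /\ le (src (mul a b)) (tgt c)) \/
    (le (src b) (tgt c) /\ le (src a) (tgt (mul b c))) ->
    le (src a) (tgt b) /\ le (src (mul a b)) (tgt c) /\
    le (src b) (tgt c) /\ le (src a) (tgt (mul b c)) /\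
    mul (mul a b) c = mul a (mul b c);
  src_mul : forall a b, le (src a) (tgt b) -> src (mul a b) = src b;
  tgt_mul : forall a b, le (src a) (tgt b) -> tgt (mul a b) = tgt a;
  src_one : forall a, src (one a) = a;
  tgt_one : forall a, tgt (one a) = a;
  one_mull : forall a c, le (src (one a)) (tgt c) -> mul (one a) c = c;
  one_mulr : forall a c, le (src c) (tgt (one a)) -> mul c (one a) = c;
  one_unique : forall a b, src b = a -> tgt b = a ->
    (forall c, le (src b) (tgt c) -> mul b c = c) ->
    (forall c, le (src c) (tgt b) -> mul c b = c) -> b = one a;
  fixed_unit : forall a, src a = a -> tgt a = a ->
    (forall b, le (src b) (tgt a) -> mul b a = b) /\
    (forall b, le (src a) (tgt b) -> mul a b = b);
  le_src_tgt_one : forall a b, le a b ->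
    le (src a) (src b) /\ le (tgt a) (tgt b) /\ le (one a) (one b);
  le_mul : forall a b c d, le a b -> le c d ->
    le (src a) (tgt c) -> le (src b) (tgt d) -> le (mul a c) (mul b d)
}.

Arguments le {_}.
Arguments src {_}.
Arguments tgt {_}.
Arguments mul {_}.
Arguments one {_}.

Definition defined {C : GenCat} (a b : C) : Prop := le (src a) (tgt b).

Definition is_functor {C D : GenCat} (F : C -> D) : Prop :=
  (forall a b : C, le a b -> le (F a) (F b)) /\
  (forall a : C, F (src a) = src (F a)) /\
  (forall a : C, F (tgt a) = tgt (F a)) /\
  (forall a b : C, defined a b -> F (mul a b) = mul (F a) (F b)) /\
  (forall a : C, F (one a) = one (F a)).

Definition is_nat_pair {C D : GenCat} (F G : C -> D) (t1 t2 : C -> D) : Prop :=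
  (forall a : C, defined (t1 a) (F a) /\ defined (G a) (t2 a) /\
                 mul (t1 a) (F a) = mul (G a) (t2 a)) /\
  (forall a b : C, tgt a = tgt b -> t1 a = t1 b) /\
  (forall a b : C, src a = src b -> t2 a = t2 b).

(* A 2-cell F => G between functors: a natural transformation, identified
   with its single map theta(x) := theta1(1_x). *)
Definition is_2cell {C D : GenCat} (F G : C -> D) (theta : C -> D) : Prop :=
  is_functor F /\ is_functor G /\
  exists t1 t2 : C -> D, is_nat_pair F G t1 t2 /\
    forall x : C, theta x = t1 (one x).

Definition id1 (C : GenCat) : C -> C := fun x => x.
Definition comp1 {C D E : GenCat} (G : D -> E) (F : C -> D) : C -> E :=
  fun x => G (F x).

Definition id2 {C D : GenCat} (F : C -> D) : C -> D := fun x => one (F x).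

Definition vcomp {C D : GenCat} (beta alpha : C -> D) : C -> D :=
  fun x => mul (beta x) (alpha x).

Definition hcomp {C D E : GenCat} (F : C -> D) (G' : D -> E)
    (beta : D -> E) (alpha : C -> D) : C -> E :=
  fun x => mul (G' (alpha x)) (beta (F x)).


(* A natural transformation (theta1, theta2) is recovered from its single map
   theta as theta1 a = theta (tgt a) and theta2 a = theta (src a).  So a 2-cell
   F => G is exactly a map theta with src (theta x) = F x, tgt (theta x) = G x
   and the naturality square theta (tgt a) . F a = G a . theta (src a).  All
   products occurring in the 2-category laws are then exactly composable
   (src a = tgt b), where axiom (3) gives plain associativity; vertical and
   horizontal composites are natural by pasting two naturality squares, and the
   interchange law exchanges one square in the middle of a fourfold product. *)

Section ExactProducts.

Context {C : GenCat}.
Implicit Types a b c d e f : C.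

Lemma defined_eq {a b} : src a = tgt b -> defined a b.
Proof. intros E; unfold defined; rewrite E; apply le_refl. Qed.

Lemma src_mulE {a b} : src a = tgt b -> src (mul a b) = src b.
Proof. intros E; apply src_mul, defined_eq, E. Qed.

Lemma tgt_mulE {a b} : src a = tgt b -> tgt (mul a b) = tgt a.
Proof. intros E; apply tgt_mul, defined_eq, E. Qed.

Lemma mulA {a b c} : src a = tgt b -> src b = tgt c ->
  mul (mul a b) c = mul a (mul b c).
Proof.
  intros Eab Ebc.
  destruct (mul_assoc C a b c) as (_ & _ & _ & _ & Eabc); [| exact Eabc].
  left; split; apply defined_eq; [exact Eab |].
  rewrite (src_mulE Eab); exact Ebc.
Qed.

Lemma mul1_tgt a : mul (one (tgt a)) a = a.
Proof. apply one_mull, defined_eq, src_one. Qed.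

Lemma mul1_src a : mul a (one (src a)) = a.
Proof. apply one_mulr, defined_eq; symmetry; apply tgt_one. Qed.

Lemma paste_squares a b c c' d e f :
  src a = tgt b -> src b = tgt c -> src a = tgt c' -> src c' = tgt d ->
  src e = tgt f -> src f = tgt d ->
  mul b c = mul c' d -> mul a c' = mul e f ->
  mul (mul a b) c = mul e (mul f d).
Proof.
  intros Eab Ebc Eac' Ec'd Eef Efd Sq1 Sq2.
  rewrite (mulA Eab Ebc), Sq1, <- (mulA Eac' Ec'd), Sq2; apply mulA; assumption.
Qed.

Lemma exchange_middle a b c d c' b' :
  src a = tgt b -> src b = tgt c -> src c = tgt d ->
  src a = tgt c' -> src c' = tgt b' -> src b' = tgt d ->
  mul b c = mul c' b' ->
  mul (mul a b) (mul c d) = mul (mul a c') (mul b' d).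
Proof.
  intros Eab Ebc Ecd Eac' Ec'b' Eb'd Sq.
  assert (Ea_bc : src a = tgt (mul b c)) by (rewrite (tgt_mulE Ebc); exact Eab).
  assert (Eab_c : src (mul a b) = tgt c) by (rewrite (src_mulE Eab); exact Ebc).
  assert (Eac'_b' : src (mul a c') = tgt b') by (rewrite (src_mulE Eac'); exact Ec'b').
  rewrite <- (mulA Eab_c Ecd), (mulA Eab Ebc), Sq, <- (mulA Eac' Ec'b').
  apply mulA; assumption.
Qed.

End ExactProducts.

Section Functors.

Context {C D : GenCat} {F : C -> D} (HF : is_functor F).

Lemma functor_le a b : le a b -> le (F a) (F b).
Proof. apply HF. Qed.

Lemma functor_src a : F (src a) = src (F a).
Proof. apply HF. Qed.

Lemma functor_tgt a : F (tgt a) = tgt (F a).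
Proof. apply HF. Qed.

Lemma functor_one a : F (one a) = one (F a).
Proof. apply HF. Qed.

Lemma functor_mul a b : src a = tgt b -> F (mul a b) = mul (F a) (F b).
Proof. intros E; apply HF, defined_eq, E. Qed.

End Functors.

Lemma id1_functor (C : GenCat) : is_functor (id1 C).
Proof. repeat split; auto. Qed.

Lemma comp1_functor (C D E : GenCat) (F : C -> D) (G : D -> E) :
  is_functor F -> is_functor G -> is_functor (comp1 G F).
Proof.
  intros HF HG; unfold comp1; repeat split.
  - intros a b Hab; apply (functor_le HG), (functor_le HF), Hab.
  - intros a; rewrite (functor_src HF), (functor_src HG); reflexivity.
  - intros a; rewrite (functor_tgt HF), (functor_tgt HG); reflexivity.
  - intros a b Hab.
    assert (HFab : defined (F a) (F b)).
    { unfold defined; rewrite <- (functor_src HF), <- (functor_tgt HF).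
      apply (functor_le HF), Hab. }
    destruct HF as (_ & _ & _ & HFmul & _).
    rewrite (HFmul a b Hab); apply HG, HFab.
  - intros a; rewrite (functor_one HF), (functor_one HG); reflexivity.
Qed.

Record natural {C D : GenCat} (F G theta : C -> D) : Prop := {
  natural_src : forall x, src (theta x) = F x;
  natural_tgt : forall x, tgt (theta x) = G x;
  natural_square : forall a, mul (theta (tgt a)) (F a) = mul (G a) (theta (src a))
}.

Arguments natural_src {C D F G theta}.
Arguments natural_tgt {C D F G theta}.
Arguments natural_square {C D F G theta}.

Lemma is_2cellP {C D : GenCat} (F G theta : C -> D) :
  is_2cell F G theta <-> is_functor F /\ is_functor G /\ natural F G theta.
Proof.
  split.
  - intros (HF & HG & t1 & t2 & ((Hsq & Ht1 & Ht2) & Htheta)).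
    assert (Ht12 : forall x, t1 (one x) = t2 (one x)).
    { intros x; destruct (Hsq (one x)) as (Hd1 & Hd2 & Sq).
      unfold defined in Hd1, Hd2; rewrite (functor_one HF) in Hd1, Sq;
        rewrite (functor_one HG) in Hd2, Sq.
      rewrite one_mulr in Sq by exact Hd1; rewrite one_mull in Sq by exact Hd2.
      exact Sq. }
    assert (Et1 : forall a, t1 a = theta (tgt a)).
    { intros a; rewrite Htheta; apply Ht1; symmetry; apply tgt_one. }
    assert (Et2 : forall a, t2 a = theta (src a)).
    { intros a; rewrite Htheta, Ht12; apply Ht2; symmetry; apply src_one. }
    split; [exact HF | split; [exact HG | split]].
    + intros x; destruct (Hsq (one x)) as (Hd1 & Hd2 & Sq).
      rewrite Htheta, Ht12, <- (src_mul _ _ _ Hd2), <- Sq, (src_mul _ _ _ Hd1).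
      rewrite (functor_one HF); apply src_one.
    + intros x; destruct (Hsq (one x)) as (Hd1 & Hd2 & Sq).
      rewrite Htheta, <- (tgt_mul _ _ _ Hd1), Sq, (tgt_mul _ _ _ Hd2).
      rewrite (functor_one HG); apply tgt_one.
    + intros a; rewrite <- Et1, <- Et2; apply Hsq.
  - intros (HF & HG & [Hsrc Htgt Hsq]).
    split; [exact HF | split; [exact HG |]].
    exists (fun a => theta (tgt a)), (fun a => theta (src a)); split.
    + split; [| split; intros a b E; rewrite E; reflexivity].
      intros a; split; [| split; [| apply Hsq]]; apply defined_eq.
      * rewrite Hsrc; apply functor_tgt, HF.
      * rewrite Htgt; symmetry; apply functor_src, HG.
    + intros x; rewrite tgt_one; reflexivity.
Qed.

(* Every composability side condition [src u = tgt v] below holds after pushing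
   [src]/[tgt] through the functors and 2-cells in context. *)
Ltac endpoints :=
  repeat match goal with
  | H : is_functor ?F |- context [src (?F ?a)] => rewrite <- (functor_src H a)
  | H : is_functor ?F |- context [tgt (?F ?a)] => rewrite <- (functor_tgt H a)
  | H : natural _ _ ?t |- context [src (?t ?a)] => rewrite (natural_src H a)
  | H : natural _ _ ?t |- context [tgt (?t ?a)] => rewrite (natural_tgt H a)
  end; reflexivity.

Section TwoCells.

Context {C D E : GenCat} {F G H : C -> D} {F' G' H' : D -> E}.
Context {alpha alpha' : C -> D} {beta beta' : D -> E}.
Hypotheses (HF : is_functor F) (HG : is_functor G) (HH : is_functor H).
Hypotheses (HF' : is_functor F') (HG' : is_functor G') (HH' : is_functor H').

Lemma id2_natural : natural F F (id2 F).
Proof.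
  unfold id2; split; intros; [apply src_one | apply tgt_one |].
  rewrite (functor_tgt HF), (functor_src HF), mul1_tgt, mul1_src; reflexivity.
Qed.

Hypotheses (Ha : natural F G alpha) (Ha' : natural G H alpha').
Hypotheses (Hb : natural F' G' beta) (Hb' : natural G' H' beta').

Lemma vcomp_natural : natural F H (vcomp alpha' alpha).
Proof.
  unfold vcomp; split.
  - intros x; rewrite src_mulE by endpoints; endpoints.
  - intros x; rewrite tgt_mulE by endpoints; endpoints.
  - intros a; apply paste_squares with (c' := G a); try endpoints;
      [apply (natural_square Ha) | apply (natural_square Ha')].
Qed.

Lemma vcomp_id2l x : vcomp (id2 G) alpha x = alpha x.
Proof. unfold vcomp, id2; rewrite <- (natural_tgt Ha); apply mul1_tgt. Qed.

Lemma vcomp_id2r x : vcomp alpha (id2 F) x = alpha x.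
Proof. unfold vcomp, id2; rewrite <- (natural_src Ha); apply mul1_src. Qed.

Lemma hcomp_natural : natural (comp1 F' F) (comp1 G' G) (hcomp F G' beta alpha).
Proof.
  unfold hcomp, comp1; split.
  - intros x; rewrite src_mulE by endpoints; endpoints.
  - intros x; rewrite tgt_mulE by endpoints; endpoints.
  - intros a; rewrite (functor_tgt HF), (functor_src HF).
    apply paste_squares with (c' := G' (F a)); try endpoints.
    + apply (natural_square Hb).
    + rewrite <- !(functor_mul HG') by endpoints.
      f_equal; apply (natural_square Ha).
Qed.

Lemma hcomp_id2_id1 x :
  hcomp F (id1 D) (id2 (id1 D)) alpha x = alpha x /\
  hcomp (id1 C) G alpha (id2 (id1 C)) x = alpha x.
Proof.
  unfold hcomp, id2, id1; split.
  - rewrite <- (natural_src Ha); apply mul1_src.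
  - rewrite (functor_one HG), <- (natural_tgt Ha); apply mul1_tgt.
Qed.

Lemma hcomp_id2 x : hcomp F F' (id2 F') (id2 F) x = id2 (comp1 F' F) x.
Proof.
  unfold hcomp, id2, comp1.
  rewrite (functor_one HF'); apply one_mull, defined_eq.
  rewrite src_one, tgt_one; reflexivity.
Qed.

Lemma interchange x :
  hcomp F H' (vcomp beta' beta) (vcomp alpha' alpha) x =
  vcomp (hcomp G H' beta' alpha') (hcomp F G' beta alpha) x.
Proof.
  unfold hcomp, vcomp.
  rewrite (functor_mul HH') by endpoints.
  apply exchange_middle; try endpoints.
  pose proof (natural_square Hb' (alpha x)) as Sq.
  rewrite (natural_tgt Ha), (natural_src Ha) in Sq; symmetry; exact Sq.
Qed.

End TwoCells.

Lemma vcomp_assoc (C D : GenCat) (F G H K : C -> D) (alpha beta gamma : C -> D) :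
  natural F G alpha -> natural G H beta -> natural H K gamma ->
  forall x, vcomp gamma (vcomp beta alpha) x = vcomp (vcomp gamma beta) alpha x.
Proof. intros Ha Hb Hc x; unfold vcomp; symmetry; apply mulA; endpoints. Qed.

Lemma hcomp_assoc (C D E B : GenCat) (F G : C -> D) (F' G' : D -> E) (F'' G'' : E -> B)
    (alpha : C -> D) (beta : D -> E) (gamma : E -> B) :
  is_functor G' -> is_functor G'' ->
  natural F G alpha -> natural F' G' beta -> natural F'' G'' gamma ->
  forall x,
    hcomp (comp1 F' F) G'' gamma (hcomp F G' beta alpha) x =
    hcomp F (comp1 G'' G') (hcomp F' G'' gamma beta) alpha x.
Proof.
  intros HG' HG'' Ha Hb Hc x; unfold hcomp, comp1.
  rewrite (functor_mul HG'') by endpoints; apply mulA; endpoints.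
Qed.

Theorem mainTheorem1 :
  (* 1-cells: identities are functors, functors compose, associatively and unitally *)
  (forall C : GenCat, is_functor (id1 C)) /\
  (forall (C D E : GenCat) (F : C -> D) (G : D -> E),
      is_functor F -> is_functor G -> is_functor (comp1 G F)) /\
  (forall (C D E B : GenCat) (F : C -> D) (G : D -> E) (H : E -> B) (x : C),
      comp1 H (comp1 G F) x = comp1 (comp1 H G) F x) /\
  (forall (C D : GenCat) (F : C -> D) (x : C),
      comp1 F (id1 C) x = F x /\ comp1 (id1 D) F x = F x) /\
  (* identity 2-cells *)
  (forall (C D : GenCat) (F : C -> D), is_functor F -> is_2cell F F (id2 F)) /\
  (* vertical composition is well defined *)
  (forall (C D : GenCat) (F G H : C -> D) (alpha beta : C -> D),
      is_2cell F G alpha -> is_2cell G H beta -> is_2cell F H (vcomp beta alpha)) /\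
  (* vertical composition is associative *)
  (forall (C D : GenCat) (F G H K : C -> D) (alpha beta gamma : C -> D),
      is_2cell F G alpha -> is_2cell G H beta -> is_2cell H K gamma ->
      forall x : C,
        vcomp gamma (vcomp beta alpha) x = vcomp (vcomp gamma beta) alpha x) /\
  (* vertical unit laws *)
  (forall (C D : GenCat) (F G : C -> D) (alpha : C -> D),
      is_2cell F G alpha ->
      forall x : C, vcomp alpha (id2 F) x = alpha x /\ vcomp (id2 G) alpha x = alpha x) /\
  (* horizontal composition is well defined *)
  (forall (C D E : GenCat) (F G : C -> D) (F' G' : D -> E) (alpha : C -> D) (beta : D -> E),
      is_2cell F G alpha -> is_2cell F' G' beta ->
      is_2cell (comp1 F' F) (comp1 G' G) (hcomp F G' beta alpha)) /\
  (* horizontal composition is associative *)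
  (forall (C D E B : GenCat) (F G : C -> D) (F' G' : D -> E) (F'' G'' : E -> B)
          (alpha : C -> D) (beta : D -> E) (gamma : E -> B),
      is_2cell F G alpha -> is_2cell F' G' beta -> is_2cell F'' G'' gamma ->
      forall x : C,
        hcomp (comp1 F' F) G'' gamma (hcomp F G' beta alpha) x =
        hcomp F (comp1 G'' G') (hcomp F' G'' gamma beta) alpha x) /\
  (* horizontal unit laws: the identity 2-cell of the identity 1-cell *)
  (forall (C D : GenCat) (F G : C -> D) (alpha : C -> D),
      is_2cell F G alpha ->
      forall x : C,
        hcomp F (id1 D) (id2 (id1 D)) alpha x = alpha x /\
        hcomp (id1 C) G alpha (id2 (id1 C)) x = alpha x) /\
  (* horizontal composition of identity 2-cells *)
  (forall (C D E : GenCat) (F : C -> D) (F' : D -> E),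
      is_functor F -> is_functor F' ->
      forall x : C, hcomp F F' (id2 F') (id2 F) x = id2 (comp1 F' F) x) /\
  (* interchange law *)
  (forall (C D E : GenCat) (F G H : C -> D) (F' G' H' : D -> E)
          (alpha alpha' : C -> D) (beta beta' : D -> E),
      is_2cell F G alpha -> is_2cell G H alpha' ->
      is_2cell F' G' beta -> is_2cell G' H' beta' ->
      forall x : C,
        hcomp F H' (vcomp beta' beta) (vcomp alpha' alpha) x =
        vcomp (hcomp G H' beta' alpha') (hcomp F G' beta alpha) x).
Proof.
  split; [exact id1_functor |].
  split; [exact comp1_functor |].
  split; [reflexivity |].
  split; [split; reflexivity |].
  split.
  { intros C D F HF; apply is_2cellP; auto using id2_natural. }
  split.
  { intros * (HF & HG & Ha)%is_2cellP (_ & HH & Hb)%is_2cellP.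
    apply is_2cellP; eauto using vcomp_natural. }
  split.
  { intros * (_ & _ & Ha)%is_2cellP (_ & _ & Hb)%is_2cellP (_ & _ & Hc)%is_2cellP.
    eapply vcomp_assoc; eassumption. }
  split.
  { intros * (_ & _ & Ha)%is_2cellP x; split; eauto using vcomp_id2r, vcomp_id2l. }
  split.
  { intros * (HF & HG & Ha)%is_2cellP (HF' & HG' & Hb)%is_2cellP.
    apply is_2cellP; split; [| split]; eauto using comp1_functor, hcomp_natural. }
  split.
  { intros * (_ & _ & Ha)%is_2cellP (_ & HG' & Hb)%is_2cellP (_ & HG'' & Hc)%is_2cellP.
    eapply hcomp_assoc; eassumption. }
  split.
  { intros * (_ & HG & Ha)%is_2cellP; eauto using hcomp_id2_id1. }
  split.
  { intros * HF HF'; eauto using hcomp_id2. }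
  intros * (HF & HG & Ha)%is_2cellP (_ & HH & Ha')%is_2cellP
    (HF' & HG' & Hb)%is_2cellP (_ & HH' & Hb')%is_2cellP.
  eauto using interchange.
Qed.
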